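(* Both identities $((xy)z)(xy)=((yx)z)(yx)$ and $(z(yx))(xy)=(z(xy))(yx)$ are consequences of $\mathcal{B}_{1,2,4}$, where $\mathcal{B}_{1,2,4}$ consists of (M1) $(xy)(zt)=(xz)(yt)$, (M2) $(xy)(zt)=(ty)(zx)$, (M3) $((xy)z)t=((xt)z)y$, (M4) $(x(yz))t=(x(tz))y$, (M5) $x((yz)t)=z((yx)t)$, (M6) $x(y(zt))=z(y(xt))$, and $x(x(yz))=(x(zy))x$. *)

Definition B124 (T : Type) (m : T -> T -> T) : Prop :=
  (forall x y z t : T, m (m x y) (m z t) = m (m x z) (m y t)) /\
  (forall x y z t : T, m (m x y) (m z t) = m (m t y) (m z x)) /\
  (forall x y z t : T, m (m (m x y) z) t = m (m (m x t) z) y) /\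
  (forall x y z t : T, m (m x (m y z)) t = m (m x (m t z)) y) /\
  (forall x y z t : T, m x (m (m y z) t) = m z (m (m y x) t)) /\
  (forall x y z t : T, m x (m y (m z t)) = m z (m y (m x t))) /\
  (forall x y z : T, m x (m x (m y z)) = m (m x (m z y)) x).


(* M1 splits off the factor [xy] and
   M3 (resp. M5) regroups the term so that the extra identity
   [u(u(vw)) = (u(wv))u] turns it into a right-nested product; there M6 moves
   [y] past [x], and M2 reassembles the term with [yx] in place of [xy]. *)

Section B124_consequences.

Variables (T : Type) (m : T -> T -> T).

Hypothesis M1 : forall x y z t : T, m (m x y) (m z t) = m (m x z) (m y t).
Hypothesis M2 : forall x y z t : T, m (m x y) (m z t) = m (m t y) (m z x).
Hypothesis M3 : forall x y z t : T, m (m (m x y) z) t = m (m (m x t) z) y.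
Hypothesis M4 : forall x y z t : T, m (m x (m y z)) t = m (m x (m t z)) y.
Hypothesis M5 : forall x y z t : T, m x (m (m y z) t) = m z (m (m y x) t).
Hypothesis M6 : forall x y z t : T, m x (m y (m z t)) = m z (m y (m x t)).
Hypothesis M7 : forall x y z : T, m x (m x (m y z)) = m (m x (m z y)) x.

Lemma left_mul_comm_swap (x y z : T) :
  m (m (m x y) z) (m x y) = m (m (m y x) z) (m y x).
Proof.
  transitivity (m (m (m x y) x) (m z y)). { apply M1. }
  transitivity (m (m (m x (m z y)) x) y). { apply M3. }
  transitivity (m (m x (m x (m y z))) y). { rewrite (M7 x y z). reflexivity. }
  transitivity (m (m y (m x (m x z))) y). { rewrite (M6 x x y z). reflexivity. }
  transitivity (m y (m y (m (m x z) x))). { symmetry. apply M7. }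
  transitivity (m (m x z) (m y (m y x))). { apply M6. }
  apply M2.
Qed.

Lemma right_mul_comm_swap (x y z : T) :
  m (m z (m y x)) (m x y) = m (m z (m x y)) (m y x).
Proof.
  transitivity (m (m z x) (m (m y x) y)). { apply M1. }
  transitivity (m x (m (m y (m z x)) y)). { apply M5. }
  transitivity (m x (m y (m y (m x z)))). { rewrite (M7 y x z). reflexivity. }
  transitivity (m x (m x (m y (m y z)))). { rewrite (M6 y y x z). reflexivity. }
  transitivity (m (m x (m (m y z) y)) x). { apply M7. }
  transitivity (m (m x (m x y)) (m y z)). { apply M4. }
  apply M2.
Qed.

End B124_consequences.

Theorem lemma6p1 (T : Type) (m : T -> T -> T) :
  B124 T m ->
  (forall x y z : T, m (m (m x y) z) (m x y) = m (m (m y x) z) (m y x)) /\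
  (forall x y z : T, m (m z (m y x)) (m x y) = m (m z (m x y)) (m y x)).
Proof.
  intros [M1 [M2 [M3 [M4 [M5 [M6 M7]]]]]].
  split.
  - exact (left_mul_comm_swap T m M1 M2 M3 M6 M7).
  - exact (right_mul_comm_swap T m M1 M2 M4 M5 M6 M7).
Qed.
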